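(* Let $H$ be a finite dimensional quasi-Hopf algebra over a field $k$ with nonzero left integral $t$. Let $A$ be a left $H$-module algebra and $B=A^H$. The following statements are equivalent: 1. the Morita map $(-,-):A\otimes_{A\#H}A\to B$, $(a,b)=t\cdot[(p_L^1\cdot a)(p_L^2\cdot b)]$, is surjective; 2. there is a total integral for $A$; 3. $A$ has an element of trace one, i.e. $a\in A$ with $t\cdot a=1_A$; 4. $A$ is an injective left $H$-module; 5. every left $(H,A)$-Hopf module is injective as an $H$-module.
   Context: Let $H$ be a quasi-Hopf algebra over a field $k$, with data $(H,\Delta,\varepsilon,\phi,S,\alpha,\beta)$, written $\Delta(h)=h_1\otimes h_2$, $\phi=X^1\otimes X^2\otimes X^3$, $\phi^{-1}=x^1\otimes x^2\otimes x^3$ (summation suppressed). The axioms are: - $\phi(\Delta\otimes I)\Delta(h)\phi^{-1}=(I\otimes\Delta)\Delta(h)$; - $(I\otimes\varepsilon)\Delta=(\varepsilon\otimes I)\Delta=I$; - $(I\otimes I\otimes\Delta)(\phi)(\Delta\otimes I\otimes I)(\phi)=(1\otimes\phi)(I\otimes\Delta\otimes I)(\phi)(\phi\otimes1)$; - $(I\otimes\varepsilon\otimes I)(\phi)=1\otimes1$; - $S$ is an anti-algebra morphism, with $S(h_1)\alpha h_2=\varepsilon(h)\alpha$ and $h_1\beta S(h_2)=\varepsilon(h)\beta$; - $X^1\beta S(X^2)\alpha X^3=1$ and $S(x^1)\alpha x^2\beta S(x^3)=1$; - $\varepsilon(\alpha)=\varepsilon(\beta)=1$. For finite dimensional $H$,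 $S$ is bijective. Define $p_L=p_L^1\otimes p_L^2=X^2S^{-1}(X^1\beta)\otimes X^3$. A left integral is $t\in H$ with $ht=\varepsilon(h)t$ for all $h$. A left $H$-module algebra is a left $H$-module $A$ with a bilinear, not necessarily associative, multiplication and a unit $1_A$ satisfying: - $(ab)c=(X^1\cdot a)[(X^2\cdot b)(X^3\cdot c)]$; - $h\cdot(ab)=(h_1\cdot a)(h_2\cdot b)$; - $h\cdot1_A=\varepsilon(h)1_A$. $B=A^H=\{a\mid h\cdot a=\varepsilon(h)a\ \forall h\}$. The smash product $A\#H=A\otimes H$ has multiplication $(a\#h)(b\#g)=(x^1\cdot a)(x^2h_1\cdot b)\#x^3h_2g$. A total integral for $A$ is a left $H$-linear $\Phi:H^*\to A$ with $\Phi(\varepsilon)=1_A$, where $(h\rightharpoonup h^* )(g)=h^*(gh)$. A left $(H,A)$-Hopf module is a left $H$-module $M$ with $A\otimes M\to M$, $a\otimes m\mapsto am$, such that: - $(ab)m=(X^1\cdot a)[(X^2\cdot b)(X^3m)]$; - $h(am)=(h_1\cdot a)(h_2m)$; - $1_Am=m$. *)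

From HB Require Import structures.
From mathcomp Require Import all_boot all_order all_algebra all_field.
Set Implicit Arguments. Unset Strict Implicit. Unset Printing Implicit Defensive.
Import GRing.Theory.
Local Open Scope ring_scope.

(* Elements of H^{(x)n} (n = 2,3,4) are represented by finite formal sums of
   pure tensors: a 2-tensor sum_i a_i (x) b_i is a list [:: (a_i, b_i); ...],
   a 3-tensor uses (x, y, z) = ((x, y), z), a 4-tensor (((x,y),z),w).
   Two formal sums represent the same tensor iff they agree on all products of
   linear functionals (H is a vector space over a field). *)
Section Tensors.
Variables (k : fieldType) (H : falgType k).

Definition teq2 (s u : seq (H * H)) : Prop :=
  forall f1 f2 : {linear H -> k^o},
    \sum_(p <- s) (f1 p.1 * f2 p.2) = \sum_(p <- u) (f1 p.1 * f2 p.2).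
Definition teq3 (s u : seq (H * H * H)) : Prop :=
  forall f1 f2 f3 : {linear H -> k^o},
    \sum_(p <- s) (f1 p.1.1 * f2 p.1.2 * f3 p.2)
    = \sum_(p <- u) (f1 p.1.1 * f2 p.1.2 * f3 p.2).
Definition teq4 (s u : seq (H * H * H * H)) : Prop :=
  forall f1 f2 f3 f4 : {linear H -> k^o},
    \sum_(p <- s) (f1 p.1.1.1 * f2 p.1.1.2 * f3 p.1.2 * f4 p.2)
    = \sum_(p <- u) (f1 p.1.1.1 * f2 p.1.1.2 * f3 p.1.2 * f4 p.2).

Definition tmul2 (s u : seq (H * H)) : seq (H * H) :=
  [seq (p.1 * q.1, p.2 * q.2) | p <- s, q <- u].
Definition tmul3 (s u : seq (H * H * H)) : seq (H * H * H) :=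
  [seq (p.1.1 * q.1.1, p.1.2 * q.1.2, p.2 * q.2) | p <- s, q <- u].
Definition tmul4 (s u : seq (H * H * H * H)) : seq (H * H * H * H) :=
  [seq (p.1.1.1 * q.1.1.1, p.1.1.2 * q.1.1.2, p.1.2 * q.1.2, p.2 * q.2)
  | p <- s, q <- u].

Variable Delta : H -> seq (H * H).

Definition DI2 (s : seq (H * H)) : seq (H * H * H) :=
  flatten [seq [seq (q.1, q.2, p.2) | q <- Delta p.1] | p <- s].
Definition ID2 (s : seq (H * H)) : seq (H * H * H) :=
  flatten [seq [seq (p.1, q.1, q.2) | q <- Delta p.2] | p <- s].
Definition IID3 (s : seq (H * H * H)) : seq (H * H * H * H) :=
  flatten [seq [seq (p.1.1, p.1.2, q.1, q.2) | q <- Delta p.2] | p <- s].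
Definition DII3 (s : seq (H * H * H)) : seq (H * H * H * H) :=
  flatten [seq [seq (q.1, q.2, p.1.2, p.2) | q <- Delta p.1.1] | p <- s].
Definition IDI3 (s : seq (H * H * H)) : seq (H * H * H * H) :=
  flatten [seq [seq (p.1.1, q.1, q.2, p.2) | q <- Delta p.1.2] | p <- s].

Definition quasiHopf (eps : H -> k) (phi phiinv : seq (H * H * H))
    (S : H -> H) (alpha beta : H) : Prop :=
  [/\
   (forall (c : k) (h g : H),
      teq2 (Delta (c *: h + g)) ([seq (c *: p.1, p.2) | p <- Delta h] ++ Delta g))
   /\ (forall h g, teq2 (Delta (h * g)) (tmul2 (Delta h) (Delta g)))
   /\ teq2 (Delta 1) [:: (1, 1)],
   (forall (c : k) (h g : H), eps (c *: h + g) = c * eps h + eps g)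
   /\ (forall h g, eps (h * g) = eps h * eps g) /\ eps 1 = 1,
   teq3 (tmul3 phi phiinv) [:: (1, 1, 1)] /\ teq3 (tmul3 phiinv phi) [:: (1, 1, 1)],
   (forall h, teq3 (tmul3 (tmul3 phi (DI2 (Delta h))) phiinv) (ID2 (Delta h))) &
   [/\
   (forall h, \sum_(p <- Delta h) eps p.2 *: p.1 = h)
   /\ (forall h, \sum_(p <- Delta h) eps p.1 *: p.2 = h),
   teq4 (tmul4 (IID3 phi) (DII3 phi))
        (tmul4 (tmul4 [seq (1, p.1.1, p.1.2, p.2) | p <- phi] (IDI3 phi))
               [seq (p.1.1, p.1.2, p.2, 1) | p <- phi]),
   teq2 [seq (eps p.1.2 *: p.1.1, p.2) | p <- phi] [:: (1, 1)],
   ((forall (c : k) (h g : H), S (c *: h + g) = c *: S h + S g)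
    /\ (forall h g, S (h * g) = S g * S h) /\ S 1 = 1)
   /\ (forall h, \sum_(p <- Delta h) S p.1 * alpha * p.2 = eps h *: alpha)
   /\ (forall h, \sum_(p <- Delta h) p.1 * beta * S p.2 = eps h *: beta) &
   (\sum_(p <- phi) p.1.1 * beta * S p.1.2 * alpha * p.2 = 1)
   /\ (\sum_(p <- phiinv) S p.1.1 * alpha * p.1.2 * beta * S p.2 = 1)
   /\ eps alpha = 1 /\ eps beta = 1]].

Definition p_L (phi : seq (H * H * H)) (Sinv : H -> H) (beta : H) : seq (H * H) :=
  [seq (p.1.2 * Sinv (p.1.1 * beta), p.2) | p <- phi].

Definition left_integral (eps : H -> k) (t : H) : Prop :=
  forall h, h * t = eps h *: t.

Definition is_Hmod (M : lmodType k) (act : H -> M -> M) : Prop :=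
  [/\ forall h, linear (act h),
      forall (c : k) (h g : H) (m : M), act (c *: h + g) m = c *: act h m + act g m,
      forall h g m, act (h * g) m = act h (act g m) &
      forall m, act 1 m = m].

Definition is_Hlin (M N : lmodType k) (actM : H -> M -> M) (actN : H -> N -> N)
    (f : M -> N) : Prop :=
  linear f /\ forall h m, f (actM h m) = actN h (f m).

Definition injective_Hmod (I : lmodType k) (actI : H -> I -> I) : Prop :=
  forall (M N : lmodType k) (actM : H -> M -> M) (actN : H -> N -> N)
         (i : M -> N) (f : M -> I),
    is_Hmod actM -> is_Hmod actN -> is_Hlin actM actN i -> injective i ->
    is_Hlin actM actI f ->
    exists g : N -> I, is_Hlin actN actI g /\ forall m, g (i m) = f m.

Definition module_algebra (eps : H -> k) (phi : seq (H * H * H))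
    (A : lmodType k) (act : H -> A -> A) (mulA : A -> A -> A) (oneA : A) : Prop :=
  [/\ is_Hmod act,
      (forall a, linear (mulA a)) /\
      (forall (c : k) (a b x : A), mulA (c *: a + b) x = c *: mulA a x + mulA b x)
      /\ (forall a, mulA oneA a = a) /\ (forall a, mulA a oneA = a),
      (forall a b c, mulA (mulA a b) c
         = \sum_(p <- phi) mulA (act p.1.1 a) (mulA (act p.1.2 b) (act p.2 c))),
      (forall h a b, act h (mulA a b)
         = \sum_(q <- Delta h) mulA (act q.1 a) (act q.2 b)) &
      (forall h, act h oneA = eps h *: oneA)].

Definition invariant (eps : H -> k) (A : lmodType k) (act : H -> A -> A) (a : A) :=
  forall h, act h a = eps h *: a.

(* Surjectivity of the Morita map (a, b) |-> t.[(p_L^1.a)(p_L^2.b)] defined on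
   A (x)_{A#H} A: every element of B is the image of a finite sum of pure tensors. *)
Definition morita_surjective (eps : H -> k) (phi : seq (H * H * H))
    (Sinv : H -> H) (beta t : H)
    (A : lmodType k) (act : H -> A -> A) (mulA : A -> A -> A) : Prop :=
  forall b : A, invariant eps act b ->
    exists s : seq (A * A),
      b = \sum_(x <- s)
            act t (\sum_(q <- p_L phi Sinv beta) mulA (act q.1 x.1) (act q.2 x.2)).

Definition harp (h : H) (f : 'Hom(H, k^o)) : 'Hom(H, k^o) :=
  linfun (fun g : H => f (g * h)).

Definition total_integral (eps : H -> k) (A : lmodType k) (act : H -> A -> A)
    (oneA : A) (Phi : 'Hom(H, k^o) -> A) : Prop :=
  [/\ linear Phi,
      forall h f, Phi (harp h f) = act h (Phi f) &
      Phi (linfun (eps : H -> k^o)) = oneA].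

Definition HA_hopf_module (eps : H -> k) (phi : seq (H * H * H))
    (A : lmodType k) (mulA : A -> A -> A) (oneA : A) (act : H -> A -> A)
    (M : lmodType k) (actH : H -> M -> M) (actA : A -> M -> M) : Prop :=
  [/\ is_Hmod actH,
      (forall a, linear (actA a)) /\
      (forall (c : k) (a b : A) (m : M), actA (c *: a + b) m = c *: actA a m + actA b m),
      (forall a b m, actA (mulA a b) m
         = \sum_(p <- phi) actA (act p.1.1 a) (actA (act p.1.2 b) (actH p.2 m))),
      (forall h a m, actH h (actA a m)
         = \sum_(q <- Delta h) actA (act q.1 a) (actH q.2 m)) &
      (forall m, actA oneA m = m)].

End Tensors.

From Pilot Require Import Defs.
From HB Require Import structures.
From mathcomp Require Import all_boot all_order all_algebra all_field.
From mathcomp Require Import ring.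
From mathcomp Require boolp classical_sets.
Set Implicit Arguments. Unset Strict Implicit. Unset Printing Implicit Defensive.
Import GRing.Theory.
Local Open Scope ring_scope.

(* (1) <-> (3): for an invariant b, the Morita map sends (b, a) to b (t . a),
   so an element of trace one gives surjectivity and a preimage of 1_A
   provides one.  (2) -> (3): pick l in H^* with l(t) = 1; as t is a left
   integral, t -> l = eps, so t . Phi(l) = Phi(eps) = 1_A.  (4) -> (2): extend
   c |-> c 1_A along the H-linear embedding c |-> c eps of k into H^*.
   (5) -> (4): A is an (H, A)-Hopf module over itself.  (3) -> (5): given a of
   trace one, a Maschke-type average built from a, t, p_R and q_R turns any
   k-linear extension into an H-linear one; it fixes H-linear maps by the
   Hausser-Nill identity for p_R, and it is H-linear because q_R Delta(t)
   intertwines left and right multiplication. *)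

Section LinearPredicate.
Variables (k : fieldType) (U V : lmodType k) (f : U -> V).
Hypothesis lf : linear f.

Let F : {linear U -> V} := HB.pack f (GRing.isLinear.Build k U V *:%R f lf).

Lemma lin0 : f 0 = 0. Proof. exact: (linear0 F). Qed.
Lemma linZ c x : f (c *: x) = c *: f x. Proof. exact: (linearZ_LR F). Qed.
Lemma lin_sum I (r : seq I) (G : I -> U) :
  f (\sum_(i <- r) G i) = \sum_(i <- r) f (G i).
Proof. exact: (linear_sum F). Qed.

End LinearPredicate.

Section LinearClosure.
Variable k : fieldType.
Implicit Types U V W : lmodType k.

Lemma lin_comp U V W (f : V -> W) (g : U -> V) :
  linear f -> linear g -> linear (fun x => f (g x)).
Proof. by move=> lf lg c x y; rewrite lg lf. Qed.

Lemma lin_sumr U V I (r : seq I) (F : I -> U -> V) :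
  (forall i, linear (F i)) -> linear (fun x => \sum_(i <- r) F i x).
Proof.
by move=> lF c x y; rewrite scaler_sumr -big_split; apply: eq_bigr => i _; rewrite lF.
Qed.

Lemma lin_scaler U V (f : U -> V) (a : k) : linear f -> linear (fun x => a *: f x).
Proof. by move=> lf c x y; rewrite lf scalerDr !scalerA mulrC. Qed.

Lemma lin_scalel U V (f : U -> k^o) (v : V) : linear f -> linear (fun x => f x *: v).
Proof. by move=> lf c x y; rewrite lf scalerDl scalerA. Qed.

Lemma eq_lin U V (f g : U -> V) : f =1 g -> linear g -> linear f.
Proof. by move=> fg lg c x y; rewrite !fg lg. Qed.

Lemma lin_mull (H : algType k) (a : H) : linear (fun x : H => a * x).
Proof. by move=> c x y; rewrite mulrDr scalerAr. Qed.

Lemma lin_mulr (H : algType k) (a : H) : linear (fun x : H => x * a).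
Proof. by move=> c x y; rewrite mulrDl scalerAl. Qed.

End LinearClosure.

Section FormalTensors.
Variables (k : fieldType) (H : falgType k).
Implicit Types (V : lmodType k) (s u : seq (H * H)) (r w : seq (H * H * H)).

Definition tsum2 V s (B : H -> H -> V) := \sum_(p <- s) B p.1 p.2.
Definition tsum3 V r (T : H -> H -> H -> V) := \sum_(p <- r) T p.1.1 p.1.2 p.2.
Definition tsum4 V (r : seq (H * H * H * H)) (T : H -> H -> H -> H -> V) :=
  \sum_(p <- r) T p.1.1.1 p.1.1.2 p.1.2 p.2.

Definition multilinear2 V (B : H -> H -> V) :=
  (forall b, linear (B^~ b)) /\ (forall a, linear (B a)).
Definition multilinear3 V (T : H -> H -> H -> V) :=
  [/\ forall b c, linear (fun a => T a b c), forall a c, linear (fun b => T a b c) &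
      forall a b, linear (T a b)].
Definition multilinear4 V (T : H -> H -> H -> H -> V) :=
  [/\ forall b c d, linear (fun a => T a b c d), forall a c d, linear (fun b => T a b c d),
      forall a b d, linear (fun c => T a b c d) & forall a b c, linear (T a b c)].

Let e := vbasis (fullv : {vspace H}).

Lemma lin_coord V (f : H -> V) : linear f -> forall a, f a = \sum_i coord e i a *: f e`_i.
Proof.
move=> lf a; rewrite {1}(coord_vbasis (memvf a)) lin_sum //.
by apply: eq_bigr => i _; rewrite linZ.
Qed.

(* The tests of [teq2], [teq3], [teq4] against products of functionals suffice
   because a multilinear map is determined by its values on a basis. *)
Lemma teq2_tsum s u V (B : H -> H -> V) : teq2 s u -> multilinear2 B -> tsum2 s B = tsum2 u B.
Proof.
move=> eq [l1 l2].
have expand x : tsum2 x B =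
    \sum_i \sum_j (\sum_(p <- x) coord e i p.1 * coord e j p.2) *: B e`_i e`_j.
  rewrite /tsum2 (eq_bigr (fun p => \sum_i \sum_j
      (coord e i p.1 * coord e j p.2) *: B e`_i e`_j)).
    rewrite exchange_big /=; apply: eq_bigr => i _; rewrite exchange_big /=.
    by apply: eq_bigr => j _; rewrite scaler_suml.
  move=> p _; rewrite (lin_coord (l1 _)); apply: eq_bigr => i _.
  rewrite (lin_coord (l2 _)) scaler_sumr; apply: eq_bigr => j _.
  by rewrite scalerA mulrC.
by rewrite !expand; apply: eq_bigr => i _; apply: eq_bigr => j _; rewrite eq.
Qed.

Lemma teq3_tsum r w V (T : H -> H -> H -> V) : teq3 r w -> multilinear3 T -> tsum3 r T = tsum3 w T.
Proof.
move=> eq [l1 l2 l3].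
have expand x : tsum3 x T = \sum_i \sum_j \sum_l
    (\sum_(p <- x) coord e i p.1.1 * coord e j p.1.2 * coord e l p.2) *: T e`_i e`_j e`_l.
  rewrite /tsum3 (eq_bigr (fun p => \sum_i \sum_j \sum_l
      (coord e i p.1.1 * coord e j p.1.2 * coord e l p.2) *: T e`_i e`_j e`_l)).
    rewrite exchange_big /=; apply: eq_bigr => i _; rewrite exchange_big /=.
    apply: eq_bigr => j _; rewrite exchange_big /=.
    by apply: eq_bigr => l _; rewrite scaler_suml.
  move=> p _; rewrite (lin_coord (l1 _ _)); apply: eq_bigr => i _.
  rewrite (lin_coord (l2 _ _)) scaler_sumr; apply: eq_bigr => j _.
  rewrite (lin_coord (l3 _ _)) !scaler_sumr; apply: eq_bigr => l _.
  by rewrite !scalerA; congr (_ *: _); ring.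
rewrite !expand; apply: eq_bigr => i _; apply: eq_bigr => j _; apply: eq_bigr => l _.
by rewrite eq.
Qed.

Lemma teq4_tsum (r w : seq (H * H * H * H)) V (T : H -> H -> H -> H -> V) :
  teq4 r w -> multilinear4 T -> tsum4 r T = tsum4 w T.
Proof.
move=> eq [l1 l2 l3 l4].
have expand x : tsum4 x T = \sum_i \sum_j \sum_l \sum_m
    (\sum_(p <- x) coord e i p.1.1.1 * coord e j p.1.1.2 * coord e l p.1.2 * coord e m p.2)
      *: T e`_i e`_j e`_l e`_m.
  rewrite /tsum4 (eq_bigr (fun p => \sum_i \sum_j \sum_l \sum_m
      (coord e i p.1.1.1 * coord e j p.1.1.2 * coord e l p.1.2 * coord e m p.2)
        *: T e`_i e`_j e`_l e`_m)).
    rewrite exchange_big /=; apply: eq_bigr => i _; rewrite exchange_big /=.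
    apply: eq_bigr => j _; rewrite exchange_big /=.
    apply: eq_bigr => l _; rewrite exchange_big /=.
    by apply: eq_bigr => m _; rewrite scaler_suml.
  move=> p _; rewrite (lin_coord (l1 _ _ _)); apply: eq_bigr => i _.
  rewrite (lin_coord (l2 _ _ _)) scaler_sumr; apply: eq_bigr => j _.
  rewrite (lin_coord (l3 _ _ _)) !scaler_sumr; apply: eq_bigr => l _.
  rewrite (lin_coord (l4 _ _ _)) !scaler_sumr; apply: eq_bigr => m _.
  by rewrite !scalerA; congr (_ *: _); ring.
rewrite !expand; apply: eq_bigr => i _; apply: eq_bigr => j _; apply: eq_bigr => l _.
by apply: eq_bigr => m _; rewrite eq.
Qed.

Lemma tsum2_seq1 V a b (B : H -> H -> V) : tsum2 [:: (a, b)] B = B a b.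
Proof. by rewrite /tsum2 big_seq1. Qed.
Lemma tsum3_seq1 V a b c (T : H -> H -> H -> V) : tsum3 [:: (a, b, c)] T = T a b c.
Proof. by rewrite /tsum3 big_seq1. Qed.

Lemma eq_tsum2 V s (T T' : H -> H -> V) : (forall a b, T a b = T' a b) -> tsum2 s T = tsum2 s T'.
Proof. by move=> eT; apply: eq_bigr => p _; rewrite eT. Qed.
Lemma eq_tsum3 V r (T T' : H -> H -> H -> V) :
  (forall a b c, T a b c = T' a b c) -> tsum3 r T = tsum3 r T'.
Proof. by move=> eT; apply: eq_bigr => p _; rewrite eT. Qed.

Lemma linear_tsum2 (U V : lmodType k) (f : U -> V) s (B : H -> H -> U) :
  linear f -> f (tsum2 s B) = tsum2 s (fun a b => f (B a b)).
Proof. by move=> lf; rewrite /tsum2 (lin_sum lf). Qed.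
Lemma linear_tsum3 (U V : lmodType k) (f : U -> V) r (T : H -> H -> H -> U) :
  linear f -> f (tsum3 r T) = tsum3 r (fun a b c => f (T a b c)).
Proof. by move=> lf; rewrite /tsum3 (lin_sum lf). Qed.

Lemma scaler_tsum2 V (x : k) s (B : H -> H -> V) :
  x *: tsum2 s B = tsum2 s (fun a b => x *: B a b).
Proof. exact: scaler_sumr. Qed.
Lemma scaler_tsum3 V (x : k) r (T : H -> H -> H -> V) :
  x *: tsum3 r T = tsum3 r (fun a b c => x *: T a b c).
Proof. exact: scaler_sumr. Qed.

Lemma exchange_tsum2 V s u (F : H -> H -> H -> H -> V) :
  tsum2 s (fun a b => tsum2 u (F a b)) = tsum2 u (fun c d => tsum2 s (fun a b => F a b c d)).
Proof. exact: exchange_big. Qed.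
Lemma exchange_tsum32 V r s (F : H -> H -> H -> H -> H -> V) :
  tsum3 r (fun a b c => tsum2 s (F a b c))
  = tsum2 s (fun x y => tsum3 r (fun a b c => F a b c x y)).
Proof. exact: exchange_big. Qed.

Lemma tsum4_map V r (f : H * H * H -> H * H * H * H) (T : H -> H -> H -> H -> V) :
  tsum4 [seq f p | p <- r] T
  = tsum3 r (fun a b c => let q := f (a, b, c) in T q.1.1.1 q.1.1.2 q.1.2 q.2).
Proof. by rewrite /tsum4 big_map; apply: eq_bigr => -[[]]. Qed.

Lemma tsum2_tmul V s u (B : H -> H -> V) :
  tsum2 (tmul2 s u) B = tsum2 s (fun a b => tsum2 u (fun a' b' => B (a * a') (b * b'))).
Proof. by rewrite /tsum2 /tmul2 big_allpairs_dep. Qed.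
Lemma tsum3_tmul V r w (T : H -> H -> H -> V) :
  tsum3 (tmul3 r w) T
  = tsum3 r (fun a b c => tsum3 w (fun a' b' c' => T (a * a') (b * b') (c * c'))).
Proof. by rewrite /tsum3 /tmul3 big_allpairs_dep. Qed.
Lemma tsum4_tmul V (r w : seq (H * H * H * H)) (T : H -> H -> H -> H -> V) :
  tsum4 (tmul4 r w) T = tsum4 r (fun a b c d =>
    tsum4 w (fun a' b' c' d' => T (a * a') (b * b') (c * c') (d * d'))).
Proof. by rewrite /tsum4 /tmul4 big_allpairs_dep. Qed.

Section Coproducts.
Variable Delta : H -> seq (H * H).

Lemma tsum3_DI2 V s (T : H -> H -> H -> V) :
  tsum3 (DI2 Delta s) T = tsum2 s (fun a b => tsum2 (Delta a) (fun a1 a2 => T a1 a2 b)).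
Proof. by rewrite /tsum3 /DI2 big_flatten big_map; apply: eq_bigr => p _; rewrite big_map. Qed.
Lemma tsum3_ID2 V s (T : H -> H -> H -> V) :
  tsum3 (ID2 Delta s) T = tsum2 s (fun a b => tsum2 (Delta b) (fun b1 b2 => T a b1 b2)).
Proof. by rewrite /tsum3 /ID2 big_flatten big_map; apply: eq_bigr => p _; rewrite big_map. Qed.
Lemma tsum4_IID3 V r (T : H -> H -> H -> H -> V) :
  tsum4 (IID3 Delta r) T = tsum3 r (fun a b c => tsum2 (Delta c) (fun c1 c2 => T a b c1 c2)).
Proof. by rewrite /tsum4 /IID3 big_flatten big_map; apply: eq_bigr => p _; rewrite big_map. Qed.
Lemma tsum4_DII3 V r (T : H -> H -> H -> H -> V) :
  tsum4 (DII3 Delta r) T = tsum3 r (fun a b c => tsum2 (Delta a) (fun a1 a2 => T a1 a2 b c)).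
Proof. by rewrite /tsum4 /DII3 big_flatten big_map; apply: eq_bigr => p _; rewrite big_map. Qed.
Lemma tsum4_IDI3 V r (T : H -> H -> H -> H -> V) :
  tsum4 (IDI3 Delta r) T = tsum3 r (fun a b c => tsum2 (Delta b) (fun b1 b2 => T a b1 b2 c)).
Proof. by rewrite /tsum4 /IDI3 big_flatten big_map; apply: eq_bigr => p _; rewrite big_map. Qed.

End Coproducts.

Lemma multilinear3_tmul V w (T : H -> H -> H -> V) : multilinear3 T ->
  multilinear3 (fun a b c => tsum3 w (fun a' b' c' => T (a * a') (b * b') (c * c'))).
Proof.
move=> [l1 l2 l3]; split => x y; apply: lin_sumr => p.
- exact: (lin_comp (l1 _ _) (lin_mulr _)).
- exact: (lin_comp (l2 _ _) (lin_mulr _)).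
- exact: (lin_comp (l3 _ _) (lin_mulr _)).
Qed.
Lemma multilinear3_mull V (T : H -> H -> H -> V) a b c : multilinear3 T ->
  multilinear3 (fun a' b' c' => T (a * a') (b * b') (c * c')).
Proof.
move=> [l1 l2 l3]; split => x y.
- exact: (lin_comp (l1 _ _) (lin_mull _)).
- exact: (lin_comp (l2 _ _) (lin_mull _)).
- exact: (lin_comp (l3 _ _) (lin_mull _)).
Qed.

Definition tequiv3 r w :=
  forall V (T : H -> H -> H -> V), multilinear3 T -> tsum3 r T = tsum3 w T.

Lemma teq3_tequiv r w : teq3 r w -> tequiv3 r w.
Proof. by move=> rw V T; apply: teq3_tsum. Qed.
Lemma tequiv3_sym r w : tequiv3 r w -> tequiv3 w r.
Proof. by move=> rw V T mT; rewrite rw. Qed.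
Lemma tequiv3_trans r w x : tequiv3 r w -> tequiv3 w x -> tequiv3 r x.
Proof. by move=> rw wx V T mT; rewrite rw ?wx. Qed.
Lemma tequiv3_tmul r r' w w' :
  tequiv3 r r' -> tequiv3 w w' -> tequiv3 (tmul3 r w) (tmul3 r' w').
Proof.
move=> rr ww V T mT; rewrite !tsum3_tmul (rr _ _ (multilinear3_tmul w mT)).
by apply: eq_bigr => p _; apply: ww; apply: multilinear3_mull.
Qed.
Lemma tequiv3_tmull r w w' : tequiv3 w w' -> tequiv3 (tmul3 r w) (tmul3 r w').
Proof. by apply: tequiv3_tmul. Qed.
Lemma tequiv3_tmulr r r' w : tequiv3 r r' -> tequiv3 (tmul3 r w) (tmul3 r' w).
Proof. by move/tequiv3_tmul; apply. Qed.

Lemma tmul3A r w x : tequiv3 (tmul3 r (tmul3 w x)) (tmul3 (tmul3 r w) x).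
Proof.
move=> V T _; rewrite !tsum3_tmul; apply: eq_bigr => p _; rewrite tsum3_tmul.
by apply: eq_bigr => q _; apply: eq_bigr => y _; rewrite !mulrA.
Qed.
Lemma tmul3_1l r : tequiv3 (tmul3 [:: (1, 1, 1)] r) r.
Proof. by move=> V T _; rewrite tsum3_tmul tsum3_seq1; apply: eq_bigr => p _; rewrite !mul1r. Qed.
Lemma tmul3_1r r : tequiv3 (tmul3 r [:: (1, 1, 1)]) r.
Proof. by move=> V T _; rewrite tsum3_tmul; apply: eq_bigr => p _; rewrite tsum3_seq1 !mulr1. Qed.

End FormalTensors.
Section QuasiHopf.
Variables (k : fieldType) (H : falgType k) (Delta : H -> seq (H * H)) (eps : H -> k)
  (phi phiinv : seq (H * H * H)) (S : H -> H) (alpha beta : H).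
Hypothesis hq : quasiHopf Delta eps phi phiinv S alpha beta.
Implicit Types V : lmodType k.

Lemma eps_linear : linear (eps : H -> k^o).
Proof. by case: hq => _ [eL _] _ _ _; exact: eL. Qed.
Lemma epsM a b : eps (a * b) = eps a * eps b.
Proof. by case: hq => _ [_ [eM _]] _ _ _; exact: eM. Qed.
Lemma eps1 : eps 1 = 1.
Proof. by case: hq => _ [_ [_ e1]] _ _ _. Qed.
Lemma antipode_linear : linear S.
Proof. by case: hq => _ _ _ _ [_ _ _ [[SL _] _] _]; exact: SL. Qed.
Lemma antipodeM a b : S (a * b) = S b * S a.
Proof. by case: hq => _ _ _ _ [_ _ _ [[_ [SM _]] _] _]; exact: SM. Qed.
Lemma antipode1 : S 1 = 1.
Proof. by case: hq => _ _ _ _ [_ _ _ [[_ [_ S1]] _] _]. Qed.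
Lemma antipode_alpha h : \sum_(p <- Delta h) S p.1 * alpha * p.2 = eps h *: alpha.
Proof. by case: hq => _ _ _ _ [_ _ _ [_ [a _]] _]; exact: a. Qed.
Lemma antipode_beta h : \sum_(p <- Delta h) p.1 * beta * S p.2 = eps h *: beta.
Proof. by case: hq => _ _ _ _ [_ _ _ [_ [_ a]] _]; exact: a. Qed.
Lemma phi_beta_alpha : \sum_(p <- phi) p.1.1 * beta * S p.1.2 * alpha * p.2 = 1.
Proof. by case: hq => _ _ _ _ [_ _ _ _ [a _]]. Qed.
Lemma eps_alpha : eps alpha = 1.
Proof. by case: hq => _ _ _ _ [_ _ _ _ [_ [_ [a _]]]]. Qed.
Lemma eps_beta : eps beta = 1.
Proof. by case: hq => _ _ _ _ [_ _ _ _ [_ [_ [_ a]]]]. Qed.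
Lemma Delta_epsr h : \sum_(p <- Delta h) eps p.2 *: p.1 = h.
Proof. by case: hq => _ _ _ _ [[a _] _ _ _ _]; exact: a. Qed.
Lemma Delta_epsl h : \sum_(p <- Delta h) eps p.1 *: p.2 = h.
Proof. by case: hq => _ _ _ _ [[_ a] _ _ _ _]; exact: a. Qed.

Lemma eps_Hmod : is_Hmod (fun h (c : k^o) => eps h * c).
Proof.
split.
- by move=> h c x y; rewrite mulrDr; congr (_ + _); rewrite /GRing.scale /= mulrCA.
- move=> c h g x; rewrite eps_linear mulrDl; congr (_ + _).
  by rewrite /GRing.scale /= mulrA.
- by move=> h g x; rewrite epsM mulrA.
- by move=> x; rewrite eps1 mul1r.
Qed.

Lemma eps_antipode h : eps (S h) = eps h.
Proof.
have leS := lin_comp eps_linear antipode_linear.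
have := congr1 eps (antipode_alpha h); rewrite (lin_sum eps_linear) (linZ eps_linear).
rewrite eps_alpha /GRing.scale /= mulr1 => <-.
rewrite -{1}(Delta_epsr h) (lin_sum leS); apply: eq_bigr => p _.
by rewrite (linZ leS) !epsM eps_alpha mulr1 mulrC.
Qed.

Lemma linear_tsum2_Delta V (B : H -> H -> V) :
  multilinear2 B -> linear (fun h => tsum2 (Delta h) B).
Proof.
move=> mB c h g; case: hq => [[DL _]] _ _ _ _.
rewrite (teq2_tsum (DL c h g) mB) /tsum2 big_cat; congr (_ + _).
rewrite /tsum2 big_map scaler_sumr; apply: eq_bigr => p _ /=.
by case: mB => l1 _; rewrite (linZ (l1 _)).
Qed.

Lemma tsum2_DeltaM V (B : H -> H -> V) a b : multilinear2 B ->
  tsum2 (Delta (a * b)) B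
  = tsum2 (Delta a) (fun a1 a2 => tsum2 (Delta b) (fun b1 b2 => B (a1 * b1) (a2 * b2))).
Proof.
by move=> mB; case: hq => [[_ [DM _]]] _ _ _ _; rewrite (teq2_tsum (DM a b) mB) tsum2_tmul.
Qed.
Lemma tsum2_Delta1 V (B : H -> H -> V) : multilinear2 B -> tsum2 (Delta 1) B = B 1 1.
Proof. by move=> mB; case: hq => [[_ [_ D1]]] _ _ _ _; rewrite (teq2_tsum D1 mB) tsum2_seq1. Qed.


Lemma tsum2_Delta_epsr V (f : H -> V) h :
  linear f -> tsum2 (Delta h) (fun a b => eps b *: f a) = f h.
Proof.
by move=> lf; rewrite -{2}(Delta_epsr h) (lin_sum lf); apply: eq_bigr => p _; rewrite (linZ lf).
Qed.
Lemma tsum2_Delta_epsl V (f : H -> V) h :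
  linear f -> tsum2 (Delta h) (fun a b => eps a *: f b) = f h.
Proof.
by move=> lf; rewrite -{2}(Delta_epsl h) (lin_sum lf); apply: eq_bigr => p _; rewrite (linZ lf).
Qed.

Lemma quasi_coassoc h :
  tequiv3 (tmul3 (tmul3 phi (DI2 Delta (Delta h))) phiinv) (ID2 Delta (Delta h)).
Proof. by case: hq => _ _ _ qc _; apply: teq3_tequiv; exact: qc. Qed.
Lemma phi_phiinv : tequiv3 (tmul3 phi phiinv) [:: (1, 1, 1)].
Proof. by case: hq => _ _ [a _] _ _; apply: teq3_tequiv. Qed.
Lemma phiinv_phi : tequiv3 (tmul3 phiinv phi) [:: (1, 1, 1)].
Proof. by case: hq => _ _ [_ a] _ _; apply: teq3_tequiv. Qed.

Lemma quasi_coassoc_mul h :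
  tequiv3 (tmul3 phi (DI2 Delta (Delta h))) (tmul3 (ID2 Delta (Delta h)) phi).
Proof.
apply: (tequiv3_trans (tequiv3_sym (tmul3_1r _))).
apply: (tequiv3_trans (tequiv3_tmull _ (tequiv3_sym phiinv_phi))).
apply: (tequiv3_trans (tmul3A _ _ _)).
exact: tequiv3_tmulr _ (quasi_coassoc h).
Qed.

Lemma quasi_coassoc_inv h :
  tequiv3 (DI2 Delta (Delta h)) (tmul3 (tmul3 phiinv (ID2 Delta (Delta h))) phi).
Proof.
apply: (tequiv3_trans (tequiv3_sym (tmul3_1l _))).
apply: (tequiv3_trans (tequiv3_tmulr _ (tequiv3_sym phiinv_phi))).
apply: (tequiv3_trans (tequiv3_sym (tmul3A _ _ _))).
apply: (tequiv3_trans (tequiv3_tmull _ (quasi_coassoc_mul h))).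
exact: tmul3A.
Qed.

Lemma phi_eps2 V (B : H -> H -> V) : multilinear2 B ->
  tsum3 phi (fun a b c => eps b *: B a c) = B 1 1.
Proof.
move=> mB; case: hq => _ _ _ _ [_ _ nrm _ _].
have := teq2_tsum nrm mB; rewrite /tsum2 big_map big_seq1 /= => <-.
by rewrite /tsum3; apply: eq_bigr => p _; case: mB => l1 _; rewrite (linZ (l1 _)).
Qed.

Lemma pentagon_lhs_eps2 V (T : H -> H -> H -> V) : multilinear3 T ->
  tsum4 (tmul4 (IID3 Delta phi) (DII3 Delta phi)) (fun a b c d => eps b *: T a c d)
  = tsum3 phi T.
Proof.
move=> [l1 l2 l3].
pose B a c := tsum2 (Delta c) (fun c1 c2 =>
  tsum3 phi (fun Y1 Y2 Y3 => T (a * Y1) (c1 * Y2) (c2 * Y3))).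
have mBa a : multilinear2 (fun b c => tsum3 phi (fun Y1 Y2 Y3 => T (a * Y1) (b * Y2) (c * Y3))).
  split=> y; apply: lin_sumr => p.
    exact: (lin_comp (l2 _ _) (lin_mulr _)).
  exact: (lin_comp (l3 _ _) (lin_mulr _)).
have mB : multilinear2 B.
  split=> x; last exact: linear_tsum2_Delta (mBa x).
  apply: lin_sumr => q; apply: lin_sumr => p.
  exact: (lin_comp (l1 _ _) (lin_mulr _)).
rewrite tsum4_tmul tsum4_IID3 (eq_tsum3 _ (T' := fun X1 X2 X3 => eps X2 *: B X1 X3)).
  rewrite phi_eps2 // /B (tsum2_Delta1 (mBa 1)).
  by apply: eq_tsum3 => *; rewrite !mul1r.
move=> a b c; rewrite scaler_tsum2; apply: eq_tsum2 => c1 c2.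
rewrite tsum4_DII3 scaler_tsum3; apply: eq_tsum3 => Y1 Y2 Y3.
rewrite (eq_tsum2 _ (T' := fun a1 a2 => eps a2 *: (eps b *: T (a * a1) (c1 * Y2) (c2 * Y3)))).
  by rewrite tsum2_Delta_epsr //; apply: lin_scaler; apply: (lin_comp (l1 _ _) (lin_mull _)).
by move=> a1 a2; rewrite epsM scalerA mulrC.
Qed.

Lemma pentagon_rhs_eps2 V (T : H -> H -> H -> V) : multilinear3 T ->
  tsum4 (tmul4 (tmul4 [seq (1, p.1.1, p.1.2, p.2) | p <- phi] (IDI3 Delta phi))
               [seq (p.1.1, p.1.2, p.2, 1) | p <- phi]) (fun a b c d => eps b *: T a c d)
  = tsum3 phi (fun X1 X2 X3 =>
      eps X1 *: tsum3 phi (fun Y1 Y2 Y3 => T Y1 (X2 * Y2) (X3 * Y3))).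
Proof.
move=> [l1 l2 l3].
rewrite tsum4_tmul tsum4_tmul tsum4_map /=; apply: eq_tsum3 => X1 X2 X3.
rewrite tsum4_IDI3 scaler_tsum3; apply: eq_tsum3 => Y1 Y2 Y3.
rewrite (eq_tsum2 _ (T' := fun y1 y2 => eps y1 *: (eps X1 *: T Y1 (X2 * y2) (X3 * Y3)))).
  by rewrite tsum2_Delta_epsl //; apply: lin_scaler; apply: (lin_comp (l2 _ _) (lin_mull _)).
move=> y1 y2; rewrite tsum4_map /=.
rewrite (eq_tsum3 _ (T' := fun Z1 Z2 Z3 =>
    eps Z2 *: ((eps X1 * eps y1) *: T (Y1 * Z1) (X2 * y2 * Z3) (X3 * Y3)))).
  rewrite phi_eps2; first by rewrite !mulr1 scalerA mulrC.
  split=> z; apply: lin_scaler.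
    exact: (lin_comp (l1 _ _) (lin_mull _)).
  exact: (lin_comp (l2 _ _) (lin_mull _)).
by move=> Z1 Z2 Z3; rewrite !epsM !mulr1 !mul1r scalerA [eps Z2 * _]mulrC.
Qed.

Lemma phi_eps1_split V (T : H -> H -> H -> V) : multilinear3 T ->
  tsum3 phi T = tsum3 phi (fun X1 X2 X3 =>
    eps X1 *: tsum3 phi (fun Y1 Y2 Y3 => T Y1 (X2 * Y2) (X3 * Y3))).
Proof.
move=> mT; rewrite -pentagon_lhs_eps2 // -pentagon_rhs_eps2 //.
have [_ _ _ _ [_ pentagon _ _ _]] := hq; apply: (teq4_tsum pentagon).
case: mT => l1 l2 l3; split=> *; [exact: lin_scaler (l1 _ _) | exact: lin_scalel eps_linear |
  exact: lin_scaler (l2 _ _) | exact: lin_scaler (l3 _ _)].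
Qed.

Lemma multilinear3_eps1 V (B : H -> H -> V) :
  multilinear2 B -> multilinear3 (fun a b c => eps a *: B b c).
Proof.
move=> [l1 l2]; split=> x y;
  [exact: lin_scalel eps_linear | exact: lin_scaler (l1 _) | exact: lin_scaler (l2 _)].
Qed.

Lemma phi_eps1 V (B : H -> H -> V) : multilinear2 B ->
  tsum3 phi (fun a b c => eps a *: B b c) = B 1 1.
Proof.
move=> mB; case: (mB) => l1 l2.
pose T a b c := tsum3 phiinv (fun y1 y2 y3 => eps (a * y1) *: B (b * y2) (c * y3)).
have mT : multilinear3 T.
  exact: (@multilinear3_tmul _ _ _ phiinv _ (multilinear3_eps1 mB)).
have := phi_eps1_split mT.
have -> : tsum3 phi T = tsum3 (tmul3 phi phiinv) (fun a b c => eps a *: B b c).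
  by rewrite tsum3_tmul.
rewrite (phi_phiinv (multilinear3_eps1 mB)) tsum3_seq1 eps1 scale1r => ->.
apply: eq_tsum3 => X1 X2 X3; congr (_ *: _).
have -> : tsum3 phi (fun Y1 Y2 Y3 => T Y1 (X2 * Y2) (X3 * Y3)) =
    tsum3 (tmul3 phi phiinv) (fun a b c => eps a *: B (X2 * b) (X3 * c)).
  by rewrite tsum3_tmul; apply: eq_tsum3 => *; apply: eq_tsum3 => *; rewrite !mulrA.
rewrite phi_phiinv; last first.
  apply: multilinear3_eps1; split=> z.
    exact: (lin_comp (l1 _) (lin_mull _)).
  exact: (lin_comp (l2 _) (lin_mull _)).
by rewrite tsum3_seq1 eps1 scale1r !mulr1.
Qed.

Lemma phiinv_eps1 V (B : H -> H -> V) : multilinear2 B ->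
  tsum3 phiinv (fun a b c => eps a *: B b c) = B 1 1.
Proof.
move=> mB; case: (mB) => l1 l2.
have := phiinv_phi (multilinear3_eps1 mB); rewrite tsum3_seq1 eps1 scale1r tsum3_tmul => <-.
apply: eq_tsum3 => x1 x2 x3; symmetry.
transitivity (eps x1 *: tsum3 phi (fun a b c => eps a *: B (x2 * b) (x3 * c))).
  by rewrite scaler_tsum3; apply: eq_tsum3 => *; rewrite epsM scalerA.
rewrite (phi_eps1 (B := fun b c => B (x2 * b) (x3 * c))) ?mulr1 //.
split => z; [exact: (lin_comp (l1 _) (lin_mull _))|exact: (lin_comp (l2 _) (lin_mull _))].
Qed.

Lemma phi_phiinv_pR V (B : H -> H -> V) a b c : multilinear2 B ->
  tsum3 phi (fun X1 X2 X3 => tsum3 phiinv (fun x1 x2 x3 =>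
    B (a * X1 * x1) (b * X2 * x2 * beta * S x3 * S X3 * c)))
  = B a (b * beta * c).
Proof.
move=> [l1 l2]; have lS := antipode_linear.
transitivity (tsum3 (tmul3 phi phiinv) (fun X1 X2 X3 => B (a * X1) (b * X2 * beta * S X3 * c))).
  rewrite tsum3_tmul; apply: eq_tsum3 => *; apply: eq_tsum3 => *.
  by rewrite antipodeM !mulrA.
rewrite phi_phiinv; first by rewrite tsum3_seq1 antipode1 !mulr1.
split=> x y.
- exact: (lin_comp (l1 _) (lin_mull _)).
- apply: (eq_lin (g := fun z => B (a * x) (b * z * (beta * S y * c)))).
    by move=> z; rewrite !mulrA.
  exact: (lin_comp (l2 _) (lin_comp (lin_mulr _) (lin_mull _))).
- apply: (eq_lin (g := fun z => B (a * x) ((b * y * beta) * S z * c))) => //.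
  exact: (lin_comp (l2 _) (lin_comp (lin_mulr _) (lin_comp (lin_mull _) lS))).
Qed.

(* [Delta(h_1) p_R (1 (x) S(h_2)) = p_R (h (x) 1)] for [p_R = x^1 (x) x^2 beta S(x^3)]. *)
Lemma pR_Delta V (B : H -> H -> V) h : multilinear2 B ->
  tsum2 (Delta h) (fun t1 t2 => tsum2 (Delta t1) (fun s1 s2 =>
     tsum3 phiinv (fun x1 x2 x3 => B (s1 * x1) (s2 * x2 * beta * S x3 * S t2))))
  = tsum3 phiinv (fun x1 x2 x3 => B (x1 * h) (x2 * beta * S x3)).
Proof.
move=> mB; case: (mB) => l1 l2; have lS := antipode_linear.
pose T a b c := tsum3 phiinv (fun x1 x2 x3 => B (a * x1) (b * x2 * beta * S x3 * S c)).
have mT : multilinear3 T.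
  split => x y; rewrite /T /tsum3; apply: lin_sumr => p.
  - exact: (lin_comp (l1 _) (lin_mulr _)).
  - apply: (eq_lin (g := fun b => B (x * p.1.1) (b * (p.1.2 * beta * S p.2 * S y)))).
      by move=> z; rewrite !mulrA.
    exact: (lin_comp (l2 _) (lin_mulr _)).
  - exact: (lin_comp (l2 _) (lin_comp (lin_mull _) lS)).
have -> : tsum2 (Delta h) (fun t1 t2 => tsum2 (Delta t1) (fun s1 s2 =>
     tsum3 phiinv (fun x1 x2 x3 => B (s1 * x1) (s2 * x2 * beta * S x3 * S t2))))
   = tsum3 (DI2 Delta (Delta h)) T by rewrite tsum3_DI2.
rewrite (quasi_coassoc_inv h mT) tsum3_tmul tsum3_tmul; apply: eq_tsum3 => y1 y2 y3.
rewrite (eq_tsum3 _ (T' := fun w1 w2 w3 => B (y1 * w1) (y2 * w2 * beta * S w3 * S y3))); last first.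
  move=> w1 w2 w3; rewrite -[_ * S w3 * S y3]mulrA -phi_phiinv_pR //.
  by apply: eq_tsum3 => *; apply: eq_tsum3 => *; rewrite !antipodeM !mulrA.
rewrite tsum3_ID2.
rewrite (eq_tsum2 _ (T' := fun a b => eps b *: B (y1 * a) (y2 * beta * S y3))); last first.
  move=> a b.
  have -> : tsum2 (Delta b) (fun b1 b2 => B (y1 * a) (y2 * b1 * beta * S b2 * S y3)) =
    B (y1 * a) (y2 * tsum2 (Delta b) (fun b1 b2 => b1 * beta * S b2) * S y3).
    rewrite (linear_tsum2 (f := fun z => B (y1 * a) (y2 * z * S y3))).
      by apply: eq_tsum2 => *; rewrite !mulrA.
    exact: (lin_comp (l2 _) (lin_comp (lin_mulr _) (lin_mull _))).
  by rewrite /tsum2 /= antipode_beta -scalerAr -scalerAl (linZ (l2 _)).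
by rewrite tsum2_Delta_epsr //; exact: (lin_comp (l1 _) (lin_mull _)).
Qed.

Section RightProjector.
Variable Sinv : H -> H.
Hypothesis SiK : cancel Sinv S.

Lemma eps_antipode_inv x : eps (Sinv x) = eps x.
Proof. by rewrite -{2}(SiK x) eps_antipode. Qed.

Lemma pL_eps1 : \sum_(q <- p_L phi Sinv beta) eps q.1 *: q.2 = 1.
Proof.
rewrite /p_L big_map /=.
transitivity (tsum3 phi (fun a b c => eps b *: (eps a *: c))).
  apply: eq_bigr => p _.
  by rewrite scalerA epsM eps_antipode_inv epsM eps_beta mulr1 mulrC.
rewrite phi_eps2 ?eps1 ?scale1r //.
by split=> x; [apply: lin_scalel eps_linear | apply: lin_scaler].
Qed.

(* [q_R^1 h_(1,1) (x) S(q_R^2 h_(1,2)) h_2 = h q_R^1 (x) S(q_R^2)]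
   for [q_R = X^1 (x) S^-1(alpha X^3) X^2]. *)
Lemma qR_Delta V (Psi : H -> H -> V) h : multilinear2 Psi ->
  tsum3 phi (fun X1 X2 X3 => tsum3 (DI2 Delta (Delta h)) (fun d1 d2 d3 =>
      Psi (X1 * d1) (S (Sinv (alpha * X3) * X2 * d2) * d3)))
  = tsum3 phi (fun X1 X2 X3 => Psi (h * X1) (S (Sinv (alpha * X3) * X2))).
Proof.
move=> mP; case: (mP) => l1 l2; have lS := antipode_linear.
pose W a b c := Psi a (S b * alpha * c).
have mW : multilinear3 W.
  split => x y; rewrite /W.
  - exact: l1.
  - exact: (lin_comp (l2 _) (lin_comp (lin_mulr _) (lin_comp (lin_mulr _) lS))).
  - exact: (lin_comp (l2 _) (lin_mull _)).
transitivity (tsum3 (tmul3 phi (DI2 Delta (Delta h))) W).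
  rewrite tsum3_tmul; apply: eq_tsum3 => X1 X2 X3; apply: eq_tsum3 => d1 d2 d3.
  by rewrite /W !antipodeM SiK !mulrA.
rewrite (quasi_coassoc_mul h mW) tsum3_tmul tsum3_ID2.
transitivity (tsum2 (Delta h) (fun a b =>
    tsum3 phi (fun X1 X2 X3 => eps b *: Psi (a * X1) (S X2 * alpha * X3)))).
  apply: eq_tsum2 => a b; rewrite -exchange_tsum32; apply: eq_tsum3 => X1 X2 X3.
  transitivity (Psi (a * X1) (S X2 * tsum2 (Delta b) (fun b1 b2 => S b1 * alpha * b2) * X3)).
    rewrite (linear_tsum2 (f := fun z => Psi (a * X1) (S X2 * z * X3))).
      by apply: eq_tsum2 => *; rewrite /W !antipodeM !mulrA.
    exact: (lin_comp (l2 _) (lin_comp (lin_mulr _) (lin_mull _))).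
  by rewrite /tsum2 /= antipode_alpha -scalerAr -scalerAl (linZ (l2 _)).
rewrite -exchange_tsum32; apply: eq_tsum3 => X1 X2 X3.
rewrite tsum2_Delta_epsr; last exact: (lin_comp (l1 _) (lin_mulr _)).
by rewrite antipodeM SiK !mulrA.
Qed.

(* For a left integral [t], [c = q_R^1 t_1 (x) S(q_R^2 t_2)] satisfies
   [c (1 (x) h) = (h (x) 1) c]. *)
Lemma qR_integral_central V (Phi : H -> H -> V) t h :
  multilinear2 Phi -> left_integral eps t ->
  tsum3 phi (fun X1 X2 X3 => tsum2 (Delta t) (fun t1 t2 =>
    Phi (X1 * t1) (S (Sinv (alpha * X3) * X2 * t2) * h)))
  = tsum3 phi (fun X1 X2 X3 => tsum2 (Delta t) (fun t1 t2 =>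
    Phi (h * X1 * t1) (S (Sinv (alpha * X3) * X2 * t2)))).
Proof.
move=> mP lt; case: (mP) => l1 l2; have lS := antipode_linear.
pose Psi a b := tsum2 (Delta t) (fun t1 t2 => Phi (a * t1) (S t2 * b)).
have mPsi : multilinear2 Psi.
  split => x; rewrite /Psi /tsum2; apply: lin_sumr => p.
    exact: (lin_comp (l1 _) (lin_mulr _)).
  exact: (lin_comp (l2 _) (lin_mull _)).
have lL : linear (fun h => tsum3 phi (fun X1 X2 X3 => tsum2 (Delta t) (fun t1 t2 =>
     Phi (X1 * t1) (S (Sinv (alpha * X3) * X2 * t2) * h)))).
  rewrite /tsum3; apply: lin_sumr => p; rewrite /tsum2; apply: lin_sumr => q.
  exact: (lin_comp (l2 _) (lin_mull _)).
rewrite -(tsum2_Delta_epsl _ lL).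
transitivity (tsum3 phi (fun X1 X2 X3 => tsum3 (DI2 Delta (Delta h)) (fun d1 d2 d3 =>
      Psi (X1 * d1) (S (Sinv (alpha * X3) * X2 * d2) * d3)))).
  transitivity (tsum3 phi (fun X1 X2 X3 => tsum2 (Delta h) (fun a b =>
      tsum2 (Delta a) (fun a1 a2 => Psi (X1 * a1) (S (Sinv (alpha * X3) * X2 * a2) * b)))));
    last by apply: eq_tsum3 => *; rewrite tsum3_DI2.
  rewrite exchange_tsum32; apply: eq_tsum2 => e1 e2.
  rewrite scaler_tsum3; apply: eq_tsum3 => X1 X2 X3.
  pose G a b := Phi (X1 * a) (S (Sinv (alpha * X3) * X2 * b) * e2).
  have mG : multilinear2 G.
    split => x; first exact: (lin_comp (l1 _) (lin_mull _)).
    exact: (lin_comp (l2 _) (lin_comp (lin_mulr _) (lin_comp lS (lin_mull _)))).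
  transitivity (eps e1 *: tsum2 (Delta t) G) => //.
  rewrite -(linZ (linear_tsum2_Delta mG)) -lt (tsum2_DeltaM _ _ mG).
  apply: eq_tsum2 => a1 a2; rewrite /Psi; apply: eq_tsum2 => t1 t2.
  by rewrite /G !antipodeM !mulrA.
rewrite (qR_Delta _ mPsi); apply: eq_tsum3 => X1 X2 X3; rewrite /Psi.
by apply: eq_tsum2 => a b; rewrite !antipodeM ?mulrA.
Qed.
End RightProjector.

End QuasiHopf.

Module LinearExtension.
Import boolp classical_sets.
Local Open Scope classical_set_scope.

Section Extension.
Variables (k : fieldType) (U V W : lmodType k) (i : U -> V) (f : U -> W).
Hypotheses (li : linear i) (lf : linear f) (ii : injective i).
Implicit Types (G : set (V * W)) (v : V).

Definition functional G := forall v w1 w2, G (v, w1) -> G (v, w2) -> w1 = w2.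
Definition lin_closed G := forall c v1 w1 v2 w2,
  G (v1, w1) -> G (v2, w2) -> G (c *: v1 + v2, c *: w1 + w2).
Definition base_graph : set (V * W) := fun p => exists u, p = (i u, f u).

(* The disjunct [G = set0] lets the union of the empty chain qualify in Zorn's lemma. *)
Definition partial_extension G :=
  [/\ G = set0 \/ base_graph `<=` G, functional G & lin_closed G].

Lemma base_graph_partial_extension : partial_extension base_graph.
Proof.
split; [by right | by move=> v w1 w2 [a [-> ->]] [b [/ii -> ->]] |].
by move=> c v1 w1 v2 w2 [a [-> ->]] [b [-> ->]]; exists (c *: a + b); rewrite li lf.
Qed.

Lemma partial_extension_chain (F : set (set (V * W))) :
  F `<=` partial_extension -> total_on F subset -> partial_extension (\bigcup_(G in F) G).
Proof.
move=> FP Ftot; split.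
- case: (pselect (exists2 G, F G & G <> set0)) => [[G FG G0]|nF].
    by right=> p Bp; exists G => //; case: (FP G FG) => -[//|BG] _ _; apply: BG.
  left; apply/seteqP; split => // p [G FG Gp]; apply: nF; exists G => // G0.
  by rewrite G0 in Gp.
- move=> v w1 w2 [G1 F1 G1p] [G2 F2 G2p].
  case: (Ftot _ _ F1 F2) => [s|s].
  + by case: (FP _ F2) => _ fG _; apply: (fG v) => //; apply: s.
  + by case: (FP _ F1) => _ fG _; apply: (fG v) => //; apply: s.
- move=> c v1 w1 v2 w2 [G1 F1 G1p] [G2 F2 G2p].
  case: (Ftot _ _ F1 F2) => [s|s].
  + by exists G2 => //; case: (FP _ F2) => _ _ lG; apply: lG => //; apply: s.
  + by exists G1 => //; case: (FP _ F1) => _ _ lG; apply: lG => //; apply: s.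
Qed.

Definition adjoin G v : set (V * W) :=
  fun p => exists c a b, G (a, b) /\ p = (a + c *: v, b).

Lemma sub_adjoin G v : G `<=` adjoin G v.
Proof. by move=> [a b] Gab; exists 0, a, b; rewrite scale0r addr0. Qed.

Lemma adjoin_lin_closed G v : lin_closed G -> lin_closed (adjoin G v).
Proof.
move=> lG c v1 w1 v2 w2 [c1 [a1 [b1 [Gab1 [-> ->]]]]] [c2 [a2 [b2 [Gab2 [-> ->]]]]].
exists (c * c1 + c2), (c *: a1 + a2), (c *: b1 + b2); split; first exact: lG.
congr (_, _); rewrite scalerDr scalerDl scalerA.
by rewrite -!addrA; congr (_ + _); rewrite addrCA.
Qed.

(* Two values at the same point of [adjoin G v] with different coefficients of [v]
   would express [v] through [G]. *)
Lemma adjoin_functional G v : functional G -> lin_closed G -> G (0, 0) ->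
  (forall w, ~ G (v, w)) -> functional (adjoin G v).
Proof.
move=> fG lG G00 nGv x w1 w2 [c1 [a1 [b1 [Gab1 [e1 ->]]]]] [c2 [a2 [b2 [Gab2 [e2 ->]]]]].
have [ec|nec] := eqVneq c1 c2.
  by move: e2; rewrite e1 ec => /addIr e; apply: (fG a1) => //; rewrite e.
case: (nGv ((c1 - c2)^-1 *: (b2 - b1))).
have -> : v = (c1 - c2)^-1 *: (a2 - a1).
  apply: (scalerI (a := c1 - c2)); first by rewrite subr_eq0.
  rewrite scalerA divff ?subr_eq0 // scale1r scalerBl.
  have e : a1 + c1 *: v = a2 + c2 *: v by rewrite -e1 -e2.
  have -> : a2 = a1 + c1 *: v - c2 *: v by rewrite e addrK.
  by rewrite [RHS]addrAC [a1 + _]addrC addrK.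
have Gn1 : G (- a1, - b1) by rewrite -(addr0 (- a1)) -(addr0 (- b1)) -!scaleN1r; apply: lG.
have G21 : G (a2 - a1, b2 - b1) by rewrite -(scale1r a2) -(scale1r b2); apply: lG.
by rewrite -(addr0 (_ *: (a2 - a1))) -(addr0 (_ *: (b2 - b1))); apply: lG.
Qed.

Lemma linear_extension : exists g : V -> W, linear g /\ forall u, g (i u) = f u.
Proof.
have [A [[[A0|BA] fA lA] Amax]] := Zorn_bigcup partial_extension_chain.
  exfalso; apply: (Amax _ _ base_graph_partial_extension); rewrite A0.
  split=> [x []|/(_ (i 0, f 0))].
  by apply; exists 0.
have A00 : A (0, 0) by apply: BA; exists 0; rewrite (lin0 li) (lin0 lf).
have Atot v : exists w, A (v, w).
  apply: contrapT => nAv; apply: (Amax (adjoin A v)).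
    split; first exact: sub_adjoin.
    move=> /(_ (v, 0)) Av; apply: nAv; exists 0; apply: Av; exists 1, 0, 0.
    by rewrite add0r scale1r.
  split; first by right=> p /BA; apply: sub_adjoin.
    by apply: adjoin_functional => // w Avw; apply: nAv; exists w.
  exact: adjoin_lin_closed.
have [g gP] := choice Atot.
exists g; split.
- by move=> c x y; apply: (fA (c *: x + y)) => //; apply: lA.
- by move=> u; apply: (fA (i u)) => //; apply: BA; exists u.
Qed.

End Extension.
End LinearExtension.

Section HModule.
Variables (k : fieldType) (H : falgType k) (M : lmodType k) (ac : H -> M -> M).
Hypothesis hM : is_Hmod ac.

Lemma Hmod_linear h : linear (ac h). Proof. by case: hM. Qed.
Lemma Hmod_linearH m : linear (ac^~ m). Proof. by case: hM => _ l _ _ c h g; apply: l. Qed.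
Lemma Hmod_mul h g m : ac (h * g) m = ac h (ac g m). Proof. by case: hM. Qed.
Lemma Hmod_1 m : ac 1 m = m. Proof. by case: hM. Qed.

End HModule.

Section Averaging.
Variables (k : fieldType) (H : falgType k) (Delta : H -> seq (H * H)) (eps : H -> k)
  (phi phiinv : seq (H * H * H)) (S Sinv : H -> H) (alpha beta t : H)
  (A : lmodType k) (act : H -> A -> A) (mulA : A -> A -> A) (oneA : A).
Hypotheses (hq : quasiHopf Delta eps phi phiinv S alpha beta) (SiK : cancel Sinv S).
Hypotheses (lt : left_integral eps t) (hA : module_algebra Delta eps phi act mulA oneA).
Variable a0 : A.
Hypothesis ha0 : act t a0 = oneA.
Variables (M : lmodType k) (actH : H -> M -> M) (actA : A -> M -> M).
Hypothesis hM : HA_hopf_module Delta eps phi mulA oneA act actH actA.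

Let hAct : is_Hmod act. Proof. by case: hA. Qed.
Let hMH : is_Hmod actH. Proof. by case: hM. Qed.
Let lA a : linear (actA a). Proof. by case: hM => _ [l _] _ _ _; apply: l. Qed.
Let lA' m : linear (actA^~ m). Proof. by case: hM => _ [_ l] _ _ _ c x y; apply: l. Qed.
Let actH_actA h a m :
  actH h (actA a m) = tsum2 (Delta h) (fun c1 c2 => actA (act c1 a) (actH c2 m)).
Proof. by case: hM. Qed.

Definition average (F : H -> M) : M :=
  tsum3 phi (fun X1 X2 X3 => tsum2 (Delta t) (fun t1 t2 =>
    tsum3 phiinv (fun x1 x2 x3 => actH (X1 * t1) (actA (act x1 a0)
      (F (x2 * beta * S x3 * S (Sinv (alpha * X3) * X2 * t2))))))).

Lemma eq_average F F' : F =1 F' -> average F = average F'.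
Proof.
by move=> eF; apply: eq_tsum3 => *; apply: eq_tsum2 => *; apply: eq_tsum3 => *; rewrite eF.
Qed.

(* [t a0 = 1] collapses the [A]-factor to counits. *)
Lemma average_collapse k1 k2 h y :
  tsum3 phiinv (fun x1 x2 x3 =>
    actA (act (k1 * (x1 * t)) a0) (actH (k2 * (x2 * beta * S x3) * h) y))
  = eps k1 *: actH (k2 * beta * h) y.
Proof.
have lS := antipode_linear hq.
rewrite (eq_tsum3 _ (T' := fun x1 x2 x3 =>
    eps x1 *: (eps k1 *: actH (k2 * x2 * beta * S x3 * h) y))).
  rewrite (phiinv_eps1 hq (B := fun b c => eps k1 *: actH (k2 * b * beta * S c * h) y)).
    by rewrite (antipode1 hq) !mulr1.
  split=> x; apply: lin_scaler.
    apply: (eq_lin (g := fun z => actH (k2 * z * (beta * S x * h)) y)).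
      by move=> z; rewrite !mulrA.
    exact: (lin_comp (Hmod_linearH hMH _) (lin_comp (lin_mulr _) (lin_mull _))).
  apply: (eq_lin (g := fun z => actH ((k2 * x * beta) * S z * h) y)) => //.
  exact: (lin_comp (Hmod_linearH hMH _) (lin_comp (lin_mulr _) (lin_comp (lin_mull _) lS))).
move=> x1 x2 x3; rewrite !mulrA (Hmod_mul hAct (k1 * x1)) ha0.
have [_ _ _ _ ->] := hA; have [_ _ _ _ unitA] := hM.
by rewrite (linZ (lA' _)) unitA (epsM hq) scalerA mulrC.
Qed.

Lemma average_act y : average (actH^~ y) = y.
Proof.
have lS := antipode_linear hq.
pose q2 X2 X3 := Sinv (alpha * X3) * X2.
pose B X2 X3 k1 k2 c d := actA (act (k1 * c) a0) (actH (k2 * d * S (q2 X2 X3)) y).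
have mB X2 X3 k1 k2 : multilinear2 (B X2 X3 k1 k2).
  split => x; rewrite /B.
    exact: (lin_comp (lA' _) (lin_comp (Hmod_linearH hAct _) (lin_mull _))).
  exact: (lin_comp (lA _) (lin_comp (Hmod_linearH hMH _) (lin_comp (lin_mulr _) (lin_mull _)))).
have expand : average (actH^~ y) = tsum3 phi (fun X1 X2 X3 => tsum2 (Delta X1) (fun k1 k2 =>
    tsum2 (Delta t) (fun t1 t2 => tsum2 (Delta t1) (fun s1 s2 => tsum3 phiinv (fun x1 x2 x3 =>
      B X2 X3 k1 k2 (s1 * x1) (s2 * x2 * beta * S x3 * S t2)))))).
  apply: eq_tsum3 => X1 X2 X3.
  transitivity (tsum2 (Delta t) (fun t1 t2 => tsum3 phiinv (fun x1 x2 x3 =>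
      tsum2 (Delta X1) (fun k1 k2 => tsum2 (Delta t1) (fun s1 s2 =>
        B X2 X3 k1 k2 (s1 * x1) (s2 * x2 * beta * S x3 * S t2)))))).
    apply: eq_tsum2 => t1 t2; apply: eq_tsum3 => x1 x2 x3.
    rewrite actH_actA (tsum2_DeltaM hq); last first.
      split => z; first exact: (lin_comp (lA' _) (Hmod_linearH hAct _)).
      exact: (lin_comp (lA _) (Hmod_linearH hMH _)).
    apply: eq_tsum2 => k1 k2; apply: eq_tsum2 => s1 s2.
    rewrite /B -(Hmod_mul hAct) -(Hmod_mul hMH) !mulrA; congr (actA _ (actH _ y)).
    by rewrite /q2 (antipodeM hq) !mulrA.
  under eq_tsum2 => t1 t2 do rewrite exchange_tsum32.
  rewrite exchange_tsum2; apply: eq_tsum2 => k1 k2; apply: eq_tsum2 => t1 t2.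
  by rewrite exchange_tsum32.
rewrite expand (eq_tsum3 _ (T' := fun X1 X2 X3 => actH (X1 * beta * S (q2 X2 X3)) y)).
  rewrite -(linear_tsum3 (f := actH^~ y)); last exact: (Hmod_linearH hMH).
  rewrite -[RHS](Hmod_1 hMH) -(phi_beta_alpha hq) /tsum3; congr (actH _ y).
  by apply: eq_bigr => p _; rewrite /q2 (antipodeM hq) SiK !mulrA.
move=> X1 X2 X3; rewrite -(tsum2_Delta_epsl hq (f := fun h => actH (h * beta * S (q2 X2 X3)) y));
  last first.
  exact: (lin_comp (Hmod_linearH hMH _) (lin_comp (lin_mulr _) (lin_mulr _))).
by apply: eq_tsum2 => k1 k2; rewrite (pR_Delta hq) // /B average_collapse.
Qed.

Section Linearization.
Variables (N : lmodType k) (actN : H -> N -> N) (g : N -> M).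
Hypotheses (hN : is_Hmod actN) (lg : linear g).

Lemma average_Hlin : is_Hlin actN actH (fun n => average (fun w => g (actN w n))).
Proof.
have lS := antipode_linear hq.
pose Phi n u w := tsum3 phiinv (fun x1 x2 x3 =>
  actH u (actA (act x1 a0) (g (actN (x2 * beta * S x3 * w) n)))).
have mPhi n : multilinear2 (Phi n).
  split => z; rewrite /Phi /tsum3; apply: lin_sumr => p.
    exact: (Hmod_linearH hMH _).
  apply: (lin_comp (Hmod_linear hMH _)); apply: (lin_comp (lA _)); apply: (lin_comp lg).
  exact: (lin_comp (Hmod_linearH hN _) (lin_mull _)).
split.
- move=> c x y; rewrite /average /tsum3 scaler_sumr -big_split; apply: eq_bigr => p _.
  rewrite /tsum2 scaler_sumr -big_split; apply: eq_bigr => q _.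
  rewrite scaler_sumr -big_split; apply: eq_bigr => r _ /=.
  by rewrite (Hmod_linear hN) lg (lA _) (Hmod_linear hMH).
- move=> h n; transitivity (tsum3 phi (fun X1 X2 X3 => tsum2 (Delta t) (fun t1 t2 =>
      Phi n (X1 * t1) (S (Sinv (alpha * X3) * X2 * t2) * h)))).
    apply: eq_tsum3 => *; apply: eq_tsum2 => *; apply: eq_tsum3 => *.
    by rewrite -(Hmod_mul hN) !mulrA.
  rewrite (qR_integral_central hq SiK h (mPhi n) lt).
  rewrite /average (linear_tsum3 _ _ (Hmod_linear hMH h)); apply: eq_tsum3 => X1 X2 X3.
  rewrite (linear_tsum2 _ _ (Hmod_linear hMH h)); apply: eq_tsum2 => t1 t2.
  rewrite /Phi (linear_tsum3 _ _ (Hmod_linear hMH h)).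
  by apply: eq_tsum3 => *; rewrite -[h * X1 * t1]mulrA (Hmod_mul hMH).
Qed.

End Linearization.

Lemma trace_one_hopf_module_injective : injective_Hmod actH.
Proof.
move=> U N actU actN i f hU hN [li iH] ii [lf fH].
have [g [lg gi]] := LinearExtension.linear_extension li lf ii.
exists (fun n => average (fun w => g (actN w n))); split; first exact: average_Hlin.
by move=> u; rewrite -[RHS]average_act; apply: eq_average => w; rewrite -iH gi fH.
Qed.

End Averaging.

Section DualModule.
Variable k : fieldType.

Lemma linfunE_lin (U V : vectType k) (F : U -> V) : linear F -> linfun F =1 F.
Proof.
move=> lF x; pose L : {linear U -> V} := HB.pack F (GRing.isLinear.Build _ _ _ _ F lF).
exact: (lfunE L x).
Qed.

Lemma exists_functional1 (U : vectType k) (u : U) : u != 0 ->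
  exists l : 'Hom(U, k^o), l u = 1.
Proof.
move=> nz_u; pose e := vbasis (fullv : {vspace U}).
have [i nz_ui] : exists i, coord e i u != 0.
  apply/existsP; apply: contraNT nz_u; rewrite negb_exists => /forallP u0.
  rewrite (coord_vbasis (memvf u)) big1 // => i _.
  by move/negPn/eqP: (u0 i) => ->; rewrite scale0r.
exists ((coord e i u)^-1 *: linfun (coord e i : U -> k^o)).
by rewrite lfunE /= lfunE /= [_ *: _]mulVf.
Qed.

Variable H : falgType k.

Lemma harpE h (f : 'Hom(H, k^o)) x : harp h f x = f (x * h).
Proof.
rewrite /harp linfunE_lin // => c y z.
by rewrite mulrDl -scalerAl linearD linearZ.
Qed.

Lemma harp_Hmod : is_Hmod (@harp k H).
Proof.
split.
- by move=> h c f g; apply/lfunP => x; rewrite harpE !add_lfunE !scale_lfunE !harpE.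
- move=> c h g f; apply/lfunP => x.
  by rewrite harpE !add_lfunE !scale_lfunE !harpE mulrDr linearD -scalerAr linearZ.
- by move=> h g f; apply/lfunP => x; rewrite !harpE mulrA.
- by move=> f; apply/lfunP => x; rewrite harpE mulr1.
Qed.

End DualModule.

Section Equivalences.
Variables (k : fieldType) (H : falgType k) (Delta : H -> seq (H * H)) (eps : H -> k)
  (phi phiinv : seq (H * H * H)) (S Sinv : H -> H) (alpha beta t : H)
  (A : lmodType k) (act : H -> A -> A) (mulA : A -> A -> A) (oneA : A).
Hypotheses (hq : quasiHopf Delta eps phi phiinv S alpha beta) (SiK : cancel Sinv S).
Hypotheses (lt : left_integral eps t) (hA : module_algebra Delta eps phi act mulA oneA).

Let hAct : is_Hmod act. Proof. by case: hA. Qed.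
Let act_one h : act h oneA = eps h *: oneA. Proof. by case: hA. Qed.

Lemma sum_act_invariantl (s : seq (H * H)) (b a : A) : Defs.invariant eps act b ->
  \sum_(q <- s) mulA (act q.1 b) (act q.2 a) = mulA b (act (\sum_(q <- s) eps q.1 *: q.2) a).
Proof.
have [_ [lm1 [lm2 _]] _ _ _] := hA; have lmr x : linear (mulA^~ x) by move=> c u v; apply: lm2.
move=> hb; rewrite (lin_sum (Hmod_linearH hAct a)) (lin_sum (lm1 b)).
apply: eq_bigr => q _.
by rewrite hb (linZ (Hmod_linearH hAct a)) (linZ (lm1 b)) (linZ (lmr _)).
Qed.

Lemma trace_one_morita_surjective a0 : act t a0 = oneA ->
  morita_surjective eps phi Sinv beta t act mulA.
Proof.
move=> ha0 b hb; exists [:: (b, a0)]; rewrite big_seq1 /= sum_act_invariantl //.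
rewrite (pL_eps1 hq SiK) (Hmod_1 hAct).
have [_ [_ [_ [_ mul1]]] _ mulH _] := hA.
by rewrite mulH sum_act_invariantl // (Delta_epsl hq) ha0 mul1.
Qed.

Lemma morita_surjective_trace_one :
  morita_surjective eps phi Sinv beta t act mulA -> exists a, act t a = oneA.
Proof.
move=> ms; have [s ->] := ms oneA act_one.
exists (\sum_(x <- s) \sum_(q <- p_L phi Sinv beta) mulA (act q.1 x.1) (act q.2 x.2)).
by rewrite (lin_sum (Hmod_linear hAct t)).
Qed.

(* [t -> l] is [l t *: eps] because [t] is a left integral. *)
Lemma total_integral_trace_one (Phi : 'Hom(H, k^o) -> A) : t != 0 ->
  total_integral eps act oneA Phi -> exists a, act t a = oneA.
Proof.
move=> nz_t [_ Phi_harp Phi_eps]; have [l lt1] := exists_functional1 nz_t.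
exists (Phi l); rewrite -Phi_harp -Phi_eps; congr (Phi _); apply/lfunP => x.
rewrite harpE lt linearZ /= lt1 linfunE_lin; [exact: mulr1 | exact: eps_linear hq].
Qed.

Lemma injective_total_integral : injective_Hmod act ->
  exists Phi : 'Hom(H, k^o) -> A, total_integral eps act oneA Phi.
Proof.
move=> injA; pose epsH := linfun (eps : H -> k^o).
have epsHE : epsH =1 eps by apply: linfunE_lin; apply: eps_linear hq.
pose i (c : k^o) := c *: epsH; pose u (c : k^o) := c *: oneA.
have hi : is_Hlin (fun h (c : k^o) => eps h * c) (@harp k H) i.
  split=> [c x y|h c]; first by rewrite /i scalerDl scalerA.
  apply/lfunP => x; rewrite /i harpE !scale_lfunE !epsHE (epsM hq) /GRing.scale /=.
  by rewrite mulrAC mulrC [eps x * _]mulrC.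
have hu : is_Hlin (fun h (c : k^o) => eps h * c) act u.
  split=> [c x y|h c]; first by rewrite /u scalerDl scalerA.
  by rewrite /u (linZ (Hmod_linear hAct h)) act_one scalerA mulrC.
have inj_i : injective i.
  by move=> c c' /lfunP /(_ 1); rewrite !scale_lfunE epsHE (eps1 hq) /GRing.scale /= !mulr1.
have [Phi [[lPhi Phi_harp] Phi_i]] := injA _ _ _ _ i u (eps_Hmod hq) (@harp_Hmod _ H) hi inj_i hu.
by exists Phi; split=> //; have := Phi_i 1; rewrite /i /u !scale1r.
Qed.

Lemma module_algebra_hopf_module : HA_hopf_module Delta eps phi mulA oneA act act mulA.
Proof. by case: hA => ? [? [? [? ?]]] ? ? ?; split. Qed.

End Equivalences.

Theorem mainTheorem7 (k : fieldType) (H : falgType k)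
  (Delta : H -> seq (H * H)) (eps : H -> k) (phi phiinv : seq (H * H * H))
  (S Sinv : H -> H) (alpha beta t : H)
  (A : lmodType k) (act : H -> A -> A) (mulA : A -> A -> A) (oneA : A) :
  quasiHopf Delta eps phi phiinv S alpha beta ->
  cancel S Sinv -> cancel Sinv S ->
  left_integral eps t -> t != 0 ->
  module_algebra Delta eps phi act mulA oneA ->
  [<-> morita_surjective eps phi Sinv beta t act mulA;
       exists Phi : 'Hom(H, k^o) -> A, total_integral eps act oneA Phi;
       exists a : A, act t a = oneA;
       injective_Hmod act;
       forall (M : lmodType k) (actH : H -> M -> M) (actA : A -> M -> M),
         HA_hopf_module Delta eps phi mulA oneA act actH actA ->
         injective_Hmod actH].
Proof.
move=> hq _ SiK lt nz_t hA.
have morita_one := morita_surjective_trace_one hA.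
have one_morita : (exists a, act t a = oneA) -> morita_surjective eps phi Sinv beta t act mulA.
  by case=> a0; apply: (trace_one_morita_surjective hq SiK hA).
have tot_one : (exists Phi, total_integral eps act oneA Phi) -> exists a, act t a = oneA.
  by case=> Phi; apply: (total_integral_trace_one hq lt).
have inj_tot := injective_total_integral hq hA.
have one_hopf : (exists a, act t a = oneA) ->
    forall (M : lmodType k) (actH : H -> M -> M) (actA : A -> M -> M),
    HA_hopf_module Delta eps phi mulA oneA act actH actA -> injective_Hmod actH.
  by case=> a0 ha0 M actH actA hM; apply: (trace_one_hopf_module_injective hq SiK lt hA ha0 hM).
have hopf_inj : (forall (M : lmodType k) (actH : H -> M -> M) (actA : A -> M -> M),
    HA_hopf_module Delta eps phi mulA oneA act actH actA -> injective_Hmod actH) ->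
    injective_Hmod act.
  by apply; apply: module_algebra_hopf_module.
tfae.
- by move=> /morita_one /one_hopf /hopf_inj /inj_tot.
- exact: tot_one.
- by move=> /one_hopf /hopf_inj.
- by move=> /inj_tot /tot_one /one_hopf.
- by move=> /hopf_inj /inj_tot /tot_one /one_morita.
Qed.
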